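(* Let $P_1=(X_1,Y_1)\neq(0,0)$ be a rational point of the plane with $Y_1\neq 0$, let $O=(0,0)$, and put $N=X_1^2+Y_1^2$. A point $P=(X,Y)$ of the plane is a rational point lying on the perpendicular bisector of the segment $OP_1$ and at rational distance from $O$ (equivalently, $P$ is the apex of a triangle in $\mathcal R$) if and only if there exist $t\in\mathbb{Q}$ with $t^2N\neq 4$ and a sign $\varepsilon\in\{+1,-1\}$ such that $$X=\frac{X_1}{2}+\varepsilon\,\frac{t^2X_1N-4tN+4X_1}{2(t^2N-4)},\qquad Y=\frac{Y_1}{2}+\varepsilon\,\frac{X_1\bigl(4tN-t^2X_1N-4X_1\bigr)}{2Y_1(t^2N-4)} .$$ In that case $|OP|=|PP_1|=|R|$, where $$R=\frac{(tN-2X_1)^2+4Y_1^2}{2t^2Y_1N-8Y_1}.$$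
   Context: A rational point of the plane is a point with rational coordinates; a rational triangle is one whose three side lengths are rational. For a fixed rational point $P_1\neq O$, $\mathcal R$ denotes the set of rational isosceles triangles $\triangle OPP_1$ with base $OP_1$, with $P$ a rational point and $|OP|=|PP_1|$; such a triangle is determined by its apex $P$, which lies on the perpendicular bisector $y=-\frac{X_1}{Y_1}x+\frac{X_1^2+Y_1^2}{2Y_1}$ of $OP_1$. *)

(* Points of the plane have coordinates in an arbitrary
   real closed field R (e.g. the real algebraic numbers); "rational" means
   "in the image of the canonical embedding ratr : rat -> R". *)
From HB Require Import structures.
From mathcomp Require Import all_boot all_order all_algebra.
Set Implicit Arguments. Unset Strict Implicit. Unset Printing Implicit Defensive.
Import Order.TTheory GRing.Theory Num.Theory.
Local Open Scope ring_scope.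

Definition is_rat (R : rcfType) (x : R) : Prop := exists q : rat, x = ratr q.

Definition dist (R : rcfType) (a b c d : R) : R :=
  Num.sqrt ((a - c) ^+ 2 + (b - d) ^+ 2).

Definition Nval (X1 Y1 : rat) : rat := X1 ^+ 2 + Y1 ^+ 2.

Definition Xform (X1 Y1 t eps : rat) : rat :=
  let N := Nval X1 Y1 in
  X1 / 2 + eps * ((t ^+ 2 * X1 * N - 4 * t * N + 4 * X1) / (2 * (t ^+ 2 * N - 4))).

Definition Yform (X1 Y1 t eps : rat) : rat :=
  let N := Nval X1 Y1 in
  Y1 / 2 + eps * ((X1 * (4 * t * N - t ^+ 2 * X1 * N - 4 * X1))
                    / (2 * Y1 * (t ^+ 2 * N - 4))).

Definition Rform (X1 Y1 t : rat) : rat :=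
  let N := Nval X1 Y1 in
  ((t * N - 2 * X1) ^+ 2 + 4 * Y1 ^+ 2) / (2 * t ^+ 2 * Y1 * N - 8 * Y1).

From HB Require Import structures.
From mathcomp Require Import all_boot all_order all_algebra.
From mathcomp Require Import ring lra.
Import Order.TTheory GRing.Theory Num.Theory.
Local Open Scope ring_scope.

(* A point of the perpendicular bisector of O P1 is determined by its abscissa
   x.  Call t a parameter of x when N (2x - 2 X1) t^2 + 4 N t - 8 x = 0; solving
   this relation for x gives x = Xform X1 Y1 t 1.  On the bisector the
   discriminant of this quadratic in t is (8 Y1 |OP|)^2, so a rational point at
   rational distance from O has a rational parameter.  Conversely the points
   Xform, Yform lie on the bisector and satisfy X^2 + Y^2 = R^2, and every point
   of the bisector is equidistant from O and P1. *)

Lemma quadratic_root (F : fieldType) (a b c d t : F) :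
  2 != 0 :> F -> a != 0 -> b ^+ 2 - 4 * a * c = d ^+ 2 ->
  t = (- b + d) / (2 * a) -> a * t ^+ 2 + b * t + c = 0.
Proof.
move=> h2 ha hd ->.
have h4 : 4 != 0 :> F by rewrite (_ : 4 = 2 * 2) ?mulf_neq0 //; ring.
have -> : a * ((- b + d) / (2 * a)) ^+ 2 + b * ((- b + d) / (2 * a)) + c
        = (d ^+ 2 - (b ^+ 2 - 4 * a * c)) / (4 * a).
  by field; rewrite h2 h4 ha.
by rewrite hd subrr mul0r.
Qed.

Lemma Nval_gt0 (X1 Y1 : rat) : Y1 != 0 -> 0 < Nval X1 Y1.
Proof. by move=> hY; rewrite /Nval ltr_wpDl ?sqr_ge0 ?exprn_even_gt0. Qed.

Definition bisector_param (X1 Y1 t x : rat) : Prop :=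
  Nval X1 Y1 * (2 * x - 2 * X1) * t ^+ 2 + 4 * Nval X1 Y1 * t - 8 * x = 0.

Section Bisector.
Variables (X1 Y1 : rat).
Hypothesis hY1 : Y1 != 0.
Local Notation N := (Nval X1 Y1).

Lemma bisector_param_sqr_neq4 t x : bisector_param X1 Y1 t x -> t ^+ 2 * N != 4.
Proof.
rewrite /bisector_param => hp; apply/eqP => h4.
have htN : t * N = 2 * X1.
  have : N * t ^+ 2 * (2 * x - 2 * X1) + 4 * N * t - 8 * x = 0 by rewrite -hp; ring.
  rewrite (mulrC N) h4; lra.
have : Y1 ^+ 2 = 0.
  have hsq : (t * N) ^+ 2 = N * (t ^+ 2 * N) by ring.
  by rewrite h4 htN /Nval in hsq; lra.
by move/eqP; rewrite expf_eq0 /= (negbTE hY1).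
Qed.

Lemma bisector_param_Xform t x : bisector_param X1 Y1 t x -> x = Xform X1 Y1 t 1.
Proof.
move=> hp; have hD : t ^+ 2 * N - 4 != 0 by rewrite subr_eq0 (bisector_param_sqr_neq4 _ _ hp).
apply/eqP; rewrite -subr_eq0.
have -> : x - Xform X1 Y1 t 1
    = (N * (2 * x - 2 * X1) * t ^+ 2 + 4 * N * t - 8 * x) / (2 * (t ^+ 2 * N - 4)).
  by move: hD; rewrite /Xform /Nval => hD; field.
by rewrite hp mul0r.
Qed.

Lemma bisector_equidistant x y : y = - (X1 / Y1) * x + N / (2 * Y1) ->
  (x - X1) ^+ 2 + (y - Y1) ^+ 2 = x ^+ 2 + y ^+ 2.
Proof. by move=> ->; rewrite /Nval; field. Qed.

Lemma bisector_discriminant x y q : y = - (X1 / Y1) * x + N / (2 * Y1) ->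
  q ^+ 2 = x ^+ 2 + y ^+ 2 ->
  (4 * N) ^+ 2 - 4 * (N * (2 * x - 2 * X1)) * - (8 * x) = (8 * Y1 * q) ^+ 2.
Proof. by move=> hy hq; rewrite !exprMn hq hy /Nval; field. Qed.

Lemma exists_bisector_param x y q : y = - (X1 / Y1) * x + N / (2 * Y1) ->
  q ^+ 2 = x ^+ 2 + y ^+ 2 -> exists t, bisector_param X1 Y1 t x.
Proof.
move=> hy hq; have hN : N != 0 by rewrite gt_eqF ?Nval_gt0.
have [-> | hx] := eqVneq x X1.
  by exists (2 * X1 / N); rewrite /bisector_param; field.
have ha : N * (2 * x - 2 * X1) != 0.
  by rewrite mulf_neq0 // subr_eq0; apply: contra hx => /eqP; lra.
exists ((- (4 * N) + 8 * Y1 * q) / (2 * (N * (2 * x - 2 * X1)))).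
exact: quadratic_root _ ha (bisector_discriminant _ _ _ hy hq) _.
Qed.

Section Sign.
Variables (t eps : rat).
Hypotheses (heps : eps = 1 \/ eps = -1) (ht : t ^+ 2 * N != 4).

Let hD : t ^+ 2 * N - 4 != 0. Proof. by rewrite subr_eq0. Qed.

Lemma Yform_on_bisector :
  Yform X1 Y1 t eps = - (X1 / Y1) * Xform X1 Y1 t eps + N / (2 * Y1).
Proof.
move: hD; rewrite /Xform /Yform /Nval => hD'.
by case: heps => ->; field; rewrite hY1 hD'.
Qed.

Lemma Xform_Yform_norm :
  Xform X1 Y1 t eps ^+ 2 + Yform X1 Y1 t eps ^+ 2 = Rform X1 Y1 t ^+ 2.
Proof.
have hR : 2 * t ^+ 2 * Y1 * N - 8 * Y1 != 0.
  by rewrite (_ : _ - _ = 2 * Y1 * (t ^+ 2 * N - 4)) ?mulf_neq0 //; ring.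
move: hD hR; rewrite /Xform /Yform /Rform /Nval => hD' hR.
by case: heps => ->; field; rewrite hY1 hD' hR.
Qed.

End Sign.
End Bisector.

Section RealClosedField.
Variable R : rcfType.

Lemma dist_ratr_sqr (a b c d r : rat) : (a - c) ^+ 2 + (b - d) ^+ 2 = r ^+ 2 ->
  dist (ratr a : R) (ratr b) (ratr c) (ratr d) = `|ratr r|.
Proof. by move=> h; rewrite /dist -!rmorphB -!rmorphXn -rmorphD h rmorphXn sqrtr_sqr. Qed.

Lemma dist_ratr_rat (a b c d q : rat) : dist (ratr a : R) (ratr b) (ratr c) (ratr d) = ratr q ->
  q ^+ 2 = (a - c) ^+ 2 + (b - d) ^+ 2.
Proof.
rewrite /dist => hq; apply: (fmorph_inj (@ratr R)).
rewrite rmorphXn /= -hq sqr_sqrtr ?addr_ge0 ?sqr_ge0 //.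
by rewrite rmorphD !rmorphXn !rmorphB.
Qed.

Lemma ratr_bisector (X1 Y1 x : rat) :
  ratr (- (X1 / Y1) * x + Nval X1 Y1 / (2 * Y1))
  = - (ratr X1 / ratr Y1) * ratr x + ratr (Nval X1 Y1) / (2 * ratr Y1) :> R.
Proof.
by rewrite rmorphD /= rmorphM /= rmorphN /= !fmorph_div /= rmorphM /= (rmorph_nat _ 2).
Qed.

Lemma dist_Xform_Yform (X1 Y1 t eps : rat) : Y1 != 0 -> (eps = 1 \/ eps = -1) ->
    t ^+ 2 * Nval X1 Y1 != 4 ->
  let X : R := ratr (Xform X1 Y1 t eps) in let Y : R := ratr (Yform X1 Y1 t eps) in
  dist X Y 0 0 = `|ratr (Rform X1 Y1 t)|
  /\ dist X Y (ratr X1) (ratr Y1) = `|ratr (Rform X1 Y1 t)|.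
Proof.
move=> hY1 he ht X Y; have hO := Xform_Yform_norm _ _ hY1 _ _ he ht.
rewrite -(rmorph0 (@ratr R)); split; apply: dist_ratr_sqr; first by rewrite !subr0.
by rewrite bisector_equidistant // Yform_on_bisector.
Qed.

End RealClosedField.

Theorem proposition1 (R : rcfType) (X1 Y1 : rat)
  (hP1 : (X1, Y1) != (0, 0)) (hY1 : Y1 != 0) :
  (forall X Y : R,
     (is_rat X /\ is_rat Y
      /\ Y = - (ratr X1 / ratr Y1) * X + ratr (Nval X1 Y1) / (2 * ratr Y1)
      /\ is_rat (dist X Y 0 0))
     <->
     (exists t eps : rat, (eps = 1 \/ eps = -1)
        /\ t ^+ 2 * Nval X1 Y1 != 4
        /\ X = ratr (Xform X1 Y1 t eps) /\ Y = ratr (Yform X1 Y1 t eps)))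
  /\
  (forall (t eps : rat) (X Y : R), (eps = 1 \/ eps = -1) ->
     t ^+ 2 * Nval X1 Y1 != 4 ->
     X = ratr (Xform X1 Y1 t eps) -> Y = ratr (Yform X1 Y1 t eps) ->
     dist X Y 0 0 = `|ratr (Rform X1 Y1 t)|
     /\ dist X Y (ratr X1) (ratr Y1) = `|ratr (Rform X1 Y1 t)|).
Proof.
split=> [X Y | t eps X Y he ht -> ->]; last exact: dist_Xform_Yform R X1 Y1 t eps hY1 he ht.
split.
  move=> [[x ->] [[y ->] [hl [q]]]]; rewrite -(rmorph0 (@ratr R)) => /dist_ratr_rat; rewrite !subr0 => hq.
  have hy : y = - (X1 / Y1) * x + Nval X1 Y1 / (2 * Y1).
    by apply: (fmorph_inj (@ratr R)); rewrite /= hl ratr_bisector.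
  have [t ht] := exists_bisector_param _ _ hY1 _ _ _ hy hq.
  have hx := bisector_param_Xform _ _ hY1 _ _ ht.
  have ht4 := bisector_param_sqr_neq4 _ _ hY1 _ _ ht.
  exists t, 1; do 3?split; [by left | exact: ht4 | by rewrite hx |].
  by rewrite hy hx -Yform_on_bisector //; left.
move=> [t [eps [he [ht [-> ->]]]]]; have [hO _] := dist_Xform_Yform R X1 Y1 t eps hY1 he ht.
do 3?split; [by exists (Xform X1 Y1 t eps) | by exists (Yform X1 Y1 t eps) | |].
  by rewrite Yform_on_bisector // ratr_bisector.
by rewrite hO -ratr_norm; exists `|Rform X1 Y1 t|.
Qed.
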